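(* Let $\mathcal{A}$ be an additive category and $\Phi\colon\mathcal{A}\to\mathcal{A}$ an automorphism of additive categories. (1) If $\mathcal{A}$ is Noetherian, then $\mathcal{A}_\Phi[t]$, $\mathcal{A}_\Phi[t^{-1}]$ and $\mathcal{A}_\Phi[t,t^{-1}]$ are Noetherian. (2) If $\mathcal{A}_\Phi[t]$ is Noetherian, then $\mathcal{A}_\Phi[t,t^{-1}]$ is Noetherian.
   Context: $\mathcal{A}_\Phi[t,t^{-1}]$ has the objects of $\mathcal{A}$; morphisms $A\to B$ are finite formal sums $\sum_{i\in\mathbb{Z}}f_it^i$ with $f_i\colon\Phi^i(A)\to B$ in $\mathcal{A}$, with composition $(\sum_jg_jt^j)\circ(\sum_if_it^i)=\sum_k(\sum_{i+j=k}g_j\circ\Phi^j(f_i))t^k$. $\mathcal{A}_\Phi[t]$ and $\mathcal{A}_\Phi[t^{-1}]$ are the subcategories with the same objects whose morphisms satisfy $f_i=0$ for $i<0$, respectively $f_i=0$ for $i>0$. For an additive category $\mathcal{B}$, a $\mathbb{Z}\mathcal{B}$-module is an additive contravariant functor $\mathcal{B}\to$ abelian groups, finitely generated if a quotient of a finite direct sum of representables $\mathrm{mor}_{\mathcal{B}}(?,B)$; $\mathcal{B}$ is Noetherian if every submodule of a finitely generated $\mathbb{Z}\mathcal{B}$-module is finitely generated. *)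

From HB Require Import structures.
From mathcomp Require Import all_boot all_algebra.
From mathcomp Require Import zify.
From Stdlib Require Import ClassicalEpsilon.
Set Implicit Arguments. Unset Strict Implicit. Unset Printing Implicit Defensive.
Import GRing.Theory Num.Theory.
Local Open Scope ring_scope.

Record abgroup := AbGroup {
  ag_car :> Type;
  ag_add : ag_car -> ag_car -> ag_car;
  ag_zero : ag_car;
  ag_opp : ag_car -> ag_car;
  ag_addA : associative ag_add;
  ag_addC : commutative ag_add;
  ag_add0 : left_id ag_zero ag_add;
  ag_addN : left_inverse ag_zero ag_opp ag_add }.
Arguments ag_add {_} _ _.
Arguments ag_zero {_}.
Arguments ag_opp {_} _.

Record precat_data := PreCatData {
  Obj : Type;
  Hom : Obj -> Obj -> Type;
  comp : forall X Y Z : Obj, Hom Y Z -> Hom X Y -> Hom X Z;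
  idm : forall X : Obj, Hom X X;
  hadd : forall X Y : Obj, Hom X Y -> Hom X Y -> Hom X Y;
  hzero : forall X Y : Obj, Hom X Y;
  hopp : forall X Y : Obj, Hom X Y -> Hom X Y }.
Arguments Hom {_} _ _.
Arguments comp {_ X Y Z} _ _.
Arguments idm {_} X.
Arguments hadd {_ X Y} _ _.
Arguments hzero {_ X Y}.
Arguments hopp {_ X Y} _.

Definition preadditive (C : precat_data) : Prop :=
  [/\ forall X Y : Obj C,
        [/\ associative (@hadd C X Y), commutative (@hadd C X Y),
            left_id (@hzero C X Y) (@hadd C X Y)
          & left_inverse (@hzero C X Y) (@hopp C X Y) (@hadd C X Y)],
      forall (W X Y Z : Obj C) (h : Hom Y Z) (g : Hom X Y) (f : Hom W X),
        comp h (comp g f) = comp (comp h g) f,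
      forall (X Y : Obj C) (f : Hom X Y), comp (idm Y) f = f /\ comp f (idm X) = f,
      forall (X Y Z : Obj C) (g1 g2 : Hom Y Z) (f : Hom X Y),
        comp (hadd g1 g2) f = hadd (comp g1 f) (comp g2 f)
    & forall (X Y Z : Obj C) (g : Hom Y Z) (f1 f2 : Hom X Y),
        comp g (hadd f1 f2) = hadd (comp g f1) (comp g f2)].

Definition is_zero_object (C : precat_data) (Z : Obj C) : Prop :=
  (forall (X : Obj C) (f : Hom Z X), f = hzero) /\
  (forall (X : Obj C) (f : Hom X Z), f = hzero).

Definition is_biproduct (C : precat_data) (X Y P : Obj C)
  (i1 : Hom X P) (i2 : Hom Y P) (p1 : Hom P X) (p2 : Hom P Y) : Prop :=
  [/\ comp p1 i1 = idm X, comp p2 i2 = idm Y, comp p1 i2 = hzero,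
      comp p2 i1 = hzero & hadd (comp i1 p1) (comp i2 p2) = idm P].

Definition additive_cat (C : precat_data) : Prop :=
  [/\ preadditive C,
      exists Z : Obj C, is_zero_object Z
    & forall X Y : Obj C, exists (P : Obj C) (i1 : Hom X P) (i2 : Hom Y P)
        (p1 : Hom P X) (p2 : Hom P Y), is_biproduct i1 i2 p1 p2].

(* Automorphisms: a functor (F0,F1) together with its inverse (G0,G1). *)
Record autom_data (C : precat_data) := AutomData {
  F0 : Obj C -> Obj C;
  G0 : Obj C -> Obj C;
  F1 : forall X Y : Obj C, Hom X Y -> Hom (F0 X) (F0 Y);
  G1 : forall X Y : Obj C, Hom X Y -> Hom (G0 X) (G0 Y);
  FG : forall X, F0 (G0 X) = X;
  GF : forall X, G0 (F0 X) = X }.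
Arguments F1 {_} _ {X Y} _.
Arguments G1 {_} _ {X Y} _.

Definition castHom (C : precat_data) (X X' Y Y' : Obj C)
  (e1 : X = X') (e2 : Y = Y') (f : Hom X Y) : Hom X' Y' :=
  match e1 in _ = X1, e2 in _ = Y1 return Hom X1 Y1 with
  | erefl, erefl => f end.

Definition castL (C : precat_data) (X X' Y : Obj C) (e : X = X')
  (f : Hom X Y) : Hom X' Y :=
  match e in _ = X1 return Hom X1 Y with erefl => f end.

Definition is_automorphism (C : precat_data) (P : autom_data C) : Prop :=
  [/\ forall (X Y Z : Obj C) (g : Hom Y Z) (f : Hom X Y),
        F1 P (comp g f) = comp (F1 P g) (F1 P f),
      forall X : Obj C, F1 P (idm X) = idm (F0 P X),
      forall (X Y : Obj C) (f g : Hom X Y), F1 P (hadd f g) = hadd (F1 P f) (F1 P g),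
      forall (X Y : Obj C) (f : Hom X Y), castHom (GF P X) (GF P Y) (G1 P (F1 P f)) = f
    & forall (X Y : Obj C) (f : Hom X Y), castHom (FG P X) (FG P Y) (F1 P (G1 P f)) = f].

Section Powers.
Variables (C : precat_data) (P : autom_data C).

Definition phi (j : int) (X : Obj C) : Obj C :=
  match j with Posz n => iter n (F0 P) X | Negz n => iter n.+1 (G0 P) X end.

Fixpoint itF1 (n : nat) (X Y : Obj C) (f : Hom X Y) :
  Hom (iter n (F0 P) X) (iter n (F0 P) Y) :=
  match n as n0 return Hom (iter n0 (F0 P) X) (iter n0 (F0 P) Y) with
  | 0 => f | n'.+1 => F1 P (itF1 n' f) end.

Fixpoint itG1 (n : nat) (X Y : Obj C) (f : Hom X Y) :
  Hom (iter n (G0 P) X) (iter n (G0 P) Y) :=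
  match n as n0 return Hom (iter n0 (G0 P) X) (iter n0 (G0 P) Y) with
  | 0 => f | n'.+1 => G1 P (itG1 n' f) end.

Definition phiM (j : int) (X Y : Obj C) (f : Hom X Y) : Hom (phi j X) (phi j Y) :=
  match j as j0 return Hom (phi j0 X) (phi j0 Y) with
  | Posz n => itF1 n f | Negz n => itG1 n.+1 f end.

Lemma phiS (k : int) X : phi (k + 1) X = F0 P (phi k X).
Proof.
case: k => [n|[|n]].
- by have -> : (Posz n + 1 = Posz n.+1) by lia.
- by rewrite /= FG.
- have -> : (Negz n.+1 + 1 = Negz n)%R by rewrite !NegzE; lia.
  by rewrite [in RHS]/= FG.
Qed.

Lemma phiP (k : int) X : phi (k - 1) X = G0 P (phi k X).
Proof.
by rewrite -{2}(subrK 1 k) phiS GF.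
Qed.

Lemma phi_add (i j : int) X : phi j (phi i X) = phi (i + j) X.
Proof.
case: j => [m|m].
- elim: m => [|m IH]; first by rewrite addr0.
  have -> : phi (Posz m.+1) (phi i X) = F0 P (phi m (phi i X)) by [].
  rewrite IH -phiS.
  by congr phi; lia.
- elim: m => [|m IH]; first by rewrite [LHS]/= -phiP; congr phi; lia.
  have -> : phi (Negz m.+1) (phi i X) = G0 P (phi (Negz m) (phi i X)) by [].
  rewrite IH -phiP.
  by congr phi; rewrite !NegzE; lia.
Qed.

Lemma phi_comp (i k : int) X : phi (k - i) (phi i X) = phi k X.
Proof. by rewrite phi_add addrC subrK. Qed.

End Powers.

Inductive tw_kind := Laurent | PosPart | NegPart.

(* which exponents i may carry a nonzero coefficient f_i *)
Definition allowed (k : tw_kind) (i : int) : bool :=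
  match k with Laurent => true | PosPart => 0 <= i | NegPart => i <= 0 end.

Definition irange (N : nat) : seq int :=
  [seq (m%:Z - N%:Z) | m <- iota 0 (N.*2.+1)].

Lemma mem_irange N i : i \in irange N -> (`|i| <= N)%N.
Proof. by case/mapP => m; rewrite mem_iota => /andP [_ hm] ->; lia. Qed.

Section Twisted.
Variables (C : precat_data) (P : autom_data C) (kd : tw_kind).

(* a morphism A -> B: a finite formal sum  sum_i f_i t^i,  f_i : Phi^i A -> B,
   represented by its family of coefficients (finitely many nonzero, and
   zero outside the allowed exponents) *)
Record thom (A B : Obj C) := THom {
  tfun : forall i : int, Hom (phi P i A) B;
  tfin : exists N : nat, forall i : int, (N < `|i|)%N -> tfun i = hzero;
  tsub : forall i : int, ~~ allowed kd i -> tfun i = hzero }.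

Definition tbnd A B (f : thom A B) : nat :=
  proj1_sig (constructive_indefinite_description _ (tfin f)).

Lemma tbndP A B (f : thom A B) i : (tbnd f < `|i|)%N -> tfun f i = hzero.
Proof. exact: (proj2_sig (constructive_indefinite_description _ (tfin f))). Qed.

(* composition: (g o f)_k = sum_{i+j=k} g_j o Phi^j(f_i); the sum is taken
   over the (finite) range of pairs where f_i and g_j may be nonzero *)
Definition tcomp_pred A B D (g : thom B D) (f : thom A B) (k : int) (i : int) : bool :=
  allowed kd i && allowed kd (k - i) && (`|k - i| <= tbnd g)%N.

Definition tcomp_fun A B D (g : thom B D) (f : thom A B) (k : int) :
  Hom (phi P k A) D :=
  \big[@hadd C _ _ / hzero]_(i <- irange (tbnd f) | tcomp_pred g f k i)
     castL (phi_comp P i k A) (comp (tfun g (k - i)) (phiM P (k - i) (tfun f i))).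

Lemma tcomp_fin A B D (g : thom B D) (f : thom A B) :
  exists N : nat, forall k : int, (N < `|k|)%N -> tcomp_fun g f k = hzero.
Proof.
exists (tbnd f + tbnd g)%N => k hk; apply: big_hasC; apply/hasPn => i /mem_irange hi.
rewrite /tcomp_pred; apply/negP => /andP [_ hki]; lia.
Qed.

Lemma allowed_sum i k : allowed kd i -> allowed kd (k - i) -> allowed kd k.
Proof. by case: kd => //= h1 h2; lia. Qed.

Lemma tcomp_sub A B D (g : thom B D) (f : thom A B) k :
  ~~ allowed kd k -> tcomp_fun g f k = hzero.
Proof.
move=> hk; apply: big_hasC; apply/hasPn => i _; rewrite /tcomp_pred.
apply/negP => /andP [/andP [h1 h2] _]; by rewrite (allowed_sum h1 h2) in hk.
Qed.

Definition tcomp A B D (g : thom B D) (f : thom A B) : thom A D :=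
  THom (tcomp_fin g f) (@tcomp_sub _ _ _ g f).

Definition tid_fun (A : Obj C) (i : int) : Hom (phi P i A) A :=
  match i as i0 return Hom (phi P i0 A) A with
  | Posz n => match n as n0 return Hom (phi P (Posz n0) A) A with
              | 0 => idm A | _.+1 => hzero end
  | Negz _ => hzero end.

Lemma tid_fin A : exists N : nat, forall i : int, (N < `|i|)%N -> tid_fun A i = hzero.
Proof. by exists 0%N => -[[|n]|n]. Qed.

Lemma tid_sub A i : ~~ allowed kd i -> tid_fun A i = hzero.
Proof. by case: i => [[|n]|n] //; case: kd. Qed.

Definition tid A : thom A A := THom (tid_fin A) (@tid_sub A).

(* zero, sum and opposite: coefficientwise (restricted to the support
   bounds and allowed exponents, outside of which the coefficients vanish) *)
Definition tzero A B : thom A B :=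
  @THom A B (fun _ => hzero) (ex_intro _ 0%N (fun _ _ => erefl)) (fun _ _ => erefl).

Definition tadd_fun A B (f g : thom A B) (i : int) : Hom (phi P i A) B :=
  if (`|i| <= maxn (tbnd f) (tbnd g))%N && allowed kd i
  then hadd (tfun f i) (tfun g i) else hzero.

Lemma tadd_fin A B (f g : thom A B) :
  exists N : nat, forall i : int, (N < `|i|)%N -> tadd_fun f g i = hzero.
Proof.
exists (maxn (tbnd f) (tbnd g)) => i hi; rewrite /tadd_fun.
by case: ifP => // /andP [h _]; move: h; rewrite leqNgt hi.
Qed.

Lemma tadd_sub A B (f g : thom A B) i : ~~ allowed kd i -> tadd_fun f g i = hzero.
Proof. by move=> h; rewrite /tadd_fun (negbTE h) andbF. Qed.

Definition tadd A B (f g : thom A B) : thom A B :=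
  THom (tadd_fin f g) (@tadd_sub A B f g).

Definition topp_fun A B (f : thom A B) (i : int) : Hom (phi P i A) B :=
  if (`|i| <= tbnd f)%N && allowed kd i then hopp (tfun f i) else hzero.

Lemma topp_fin A B (f : thom A B) :
  exists N : nat, forall i : int, (N < `|i|)%N -> topp_fun f i = hzero.
Proof.
exists (tbnd f) => i hi; rewrite /topp_fun.
by case: ifP => // /andP [h _]; move: h; rewrite leqNgt hi.
Qed.

Lemma topp_sub A B (f : thom A B) i : ~~ allowed kd i -> topp_fun f i = hzero.
Proof. by move=> h; rewrite /topp_fun (negbTE h) andbF. Qed.

Definition topp A B (f : thom A B) : thom A B :=
  THom (topp_fin f) (@topp_sub A B f).

Definition twisted : precat_data :=
  @PreCatData (Obj C) thom tcomp tid tadd tzero topp.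

End Twisted.

Definition laurent_cat (C : precat_data) (P : autom_data C) := twisted P Laurent.
Definition poly_cat (C : precat_data) (P : autom_data C) := twisted P PosPart.
Definition invpoly_cat (C : precat_data) (P : autom_data C) := twisted P NegPart.

Section Modules.
Variable C : precat_data.

(* data of a contravariant functor  C -> abelian groups *)
Record module := Module {
  mod_obj : Obj C -> abgroup;
  mod_act : forall X Y : Obj C, Hom X Y -> mod_obj Y -> mod_obj X }.
Arguments mod_act _ {X Y} _ _.

Definition is_module (M : module) : Prop :=
  [/\ forall (X Y : Obj C) (f : Hom X Y) (y1 y2 : mod_obj M Y),
        mod_act M f (ag_add y1 y2) = ag_add (mod_act M f y1) (mod_act M f y2),
      forall (X Y : Obj C) (f g : Hom X Y) (y : mod_obj M Y),
        mod_act M (hadd f g) y = ag_add (mod_act M f y) (mod_act M g y),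
      forall (X Y Z : Obj C) (g : Hom Y Z) (f : Hom X Y) (z : mod_obj M Z),
        mod_act M (comp g f) z = mod_act M f (mod_act M g z)
    & forall (X : Obj C) (x : mod_obj M X), mod_act M (idm X) x = x].

Definition is_submodule (M : module) (N : forall X : Obj C, mod_obj M X -> Prop) : Prop :=
  [/\ forall X, N X ag_zero,
      forall X (x y : mod_obj M X), N X x -> N X y -> N X (ag_add x y),
      forall X (x : mod_obj M X), N X x -> N X (ag_opp x)
    & forall (X Y : Obj C) (f : Hom X Y) (y : mod_obj M Y), N Y y -> N X (mod_act M f y)].

(* N (a submodule of M) is finitely generated: there are objects B_0..B_{n-1}
   and a natural transformation  eta : (+)_k mor(?, B_k) -> M  of
   ZC-modules whose image is exactly N, i.e. N is a quotient of a finite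
   direct sum of representables *)
Definition fg_sub (M : module) (N : forall X : Obj C, mod_obj M X -> Prop) : Prop :=
  exists (n : nat) (B : 'I_n -> Obj C)
         (eta : forall X : Obj C, (forall k : 'I_n, Hom X (B k)) -> mod_obj M X),
    [/\ forall X (fs gs : forall k : 'I_n, Hom X (B k)),
          eta X (fun k => hadd (fs k) (gs k)) = ag_add (eta X fs) (eta X gs),
        forall (X Y : Obj C) (h : Hom X Y) (fs : forall k : 'I_n, Hom Y (B k)),
          eta X (fun k => comp (fs k) h) = mod_act M h (eta Y fs)
      & forall X (x : mod_obj M X), N X x <-> exists fs, eta X fs = x].

Definition fg_module (M : module) : Prop := @fg_sub M (fun _ _ => True).

Definition noetherian : Prop :=
  forall M : module, is_module M -> fg_module M ->
  forall N, @is_submodule M N -> @fg_sub M N.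

End Modules.

(* The polynomial cases are the Hilbert basis theorem.  A category is
   Noetherian as soon as its ideals (submodules of representable functors)
   are finitely generated: by induction on the number of generators
   [g_0, ..., g_n] of a module, the intersection of a submodule [N] with
   their span is generated by lifts of generators of the ideal of those [f]
   with [f g_0 \in N + span (g_1, ..., g_n)], together with generators of the
   intersection with [span (g_1, ..., g_n)].  For an ideal [J] of
   [mor(?, B)] in [A_Phi[t]], the leading coefficients of the elements of [J]
   of degree at most [n] form an increasing chain of ideals [L_n] of
   [mor_A(?, B)]; their union is finitely generated, so the chain is
   constant from some [m] on, and lifts to [J] of generators of
   [L_0, ..., L_m] generate [J], by induction on the degree.  [A_Phi[t^-1]]
   is the same with [t^-1] in place of [t].
   For the Laurent case, let a module [M] over [A_Phi[t,t^-1]] be generated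
   by [g], and [N] be a submodule.  The [A_Phi[t]]-span of [g] is a finitely
   generated [A_Phi[t]]-module, so its intersection with [N] is finitely
   generated, and these generators generate [N]: if [n] bounds the degrees of
   the coefficients expressing [x \in N] through [g], then [t^n x] lies in
   that intersection, and [x = t^-n (t^n x)]. *)

From HB Require Import structures.
From mathcomp Require Import all_boot all_algebra zify.
From Stdlib Require Import ClassicalEpsilon FunctionalExtensionality ProofIrrelevance.
Set Implicit Arguments. Unset Strict Implicit. Unset Printing Implicit Defensive.
Import GRing.Theory Num.Theory.
Local Open Scope ring_scope.

Lemma big_seq_only1 (R : Type) (idx : R) (op : Monoid.com_law idx) (I : eqType)
    (r : seq I) (Pr : pred I) (F : I -> R) (i0 : I) :
  uniq r -> (forall i, i != i0 -> F i = idx) ->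
  \big[op/idx]_(i <- r | Pr i) F i = if (i0 \in r) && Pr i0 then F i0 else idx.
Proof.
move=> ur hF; rewrite big_mkcond; case hin: (i0 \in r).
- rewrite (bigD1_seq i0) //= big1 ?Monoid.mulm1 // => i hi.
  by rewrite hF //; case: (Pr i).
- rewrite big1_seq // => i /andP [_ hi]; rewrite hF; first by case: (Pr i).
  by apply/eqP => e; rewrite e hin in hi.
Qed.

Arguments big_seq_only1 {R idx op I r Pr F} i0.

Lemma irange_uniq N : uniq (irange N).
Proof. by rewrite map_inj_uniq ?iota_uniq // => m m' /=; lia. Qed.

Lemma mem_irangeP N (i : int) : (`|i| <= N)%N -> i \in irange N.
Proof.
move=> h; apply/mapP; exists (absz (i + N%:Z)); last by lia.
by rewrite mem_iota; apply/andP; split; lia.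
Qed.

HB.instance Definition _ (A : abgroup) :=
  Monoid.isComLaw.Build (ag_car A) ag_zero (@ag_add A) (@ag_addA A) (@ag_addC A) (@ag_add0 A).

Section AbGroupTheory.
Variable A : abgroup.
Implicit Types x y z : A.

Lemma ag_addr0 x : ag_add x ag_zero = x.
Proof. by rewrite ag_addC ag_add0. Qed.

Lemma ag_addrN x : ag_add x (ag_opp x) = ag_zero.
Proof. by rewrite ag_addC ag_addN. Qed.

Lemma ag_addKl x y : ag_add (ag_opp x) (ag_add x y) = y.
Proof. by rewrite ag_addA ag_addN ag_add0. Qed.

Lemma ag_addrI x : injective (ag_add x).
Proof. by move=> y z h; rewrite -(ag_addKl x y) h ag_addKl. Qed.

Lemma ag_idem0 x : ag_add x x = x -> x = ag_zero.
Proof. by move=> h; apply: (@ag_addrI x); rewrite h ag_addr0. Qed.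

Lemma ag_opp_uniq x y : ag_add y x = ag_zero -> y = ag_opp x.
Proof. by move=> h; apply: (@ag_addrI x); rewrite ag_addC h ag_addrN. Qed.

Lemma ag_opp0 : ag_opp (@ag_zero A) = ag_zero.
Proof. by symmetry; apply: ag_opp_uniq; rewrite ag_add0. Qed.

Lemma ag_addACA x y z (t : A) :
  ag_add (ag_add x y) (ag_add z t) = ag_add (ag_add x z) (ag_add y t).
Proof. by rewrite -!ag_addA; congr ag_add; rewrite !ag_addA; congr ag_add; rewrite ag_addC. Qed.

Lemma ag_oppD x y : ag_opp (ag_add x y) = ag_add (ag_opp x) (ag_opp y).
Proof. by symmetry; apply: ag_opp_uniq; rewrite ag_addACA !ag_addN ag_add0. Qed.

Lemma ag_oppK x : ag_opp (ag_opp x) = x.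
Proof. by symmetry; apply: ag_opp_uniq; rewrite ag_addrN. Qed.

Lemma ag_subK x y : ag_add (ag_add x (ag_opp y)) y = x.
Proof. by rewrite -ag_addA ag_addN ag_addr0. Qed.

Lemma ag_opp_sum I (r : seq I) (F : I -> A) :
  ag_opp (\big[ag_add/ag_zero]_(i <- r) F i) = \big[ag_add/ag_zero]_(i <- r) ag_opp (F i).
Proof. exact: (big_morph ag_opp ag_oppD ag_opp0). Qed.

End AbGroupTheory.

(* Morphisms whose endpoints are only propositionally equal (typically
   [phi P i A] for an index known up to an equation) are compared through
   their tags. *)
Section TaggedHom.
Variable C : precat_data.

Definition htag (X Y : Obj C) (f : Hom X Y) : {p : Obj C * Obj C & Hom p.1 p.2} :=
  existT (fun p : Obj C * Obj C => Hom p.1 p.2) (X, Y) f.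

Lemma htag_inj X Y (f g : Hom X Y) : htag f = htag g -> f = g.
Proof. exact: ProofIrrelevanceTheory.EqdepTheory.inj_pair2. Qed.

Lemma htag_obj X Y X' Y' (f : Hom X Y) (g : Hom X' Y') :
  htag f = htag g -> X = X' /\ Y = Y'.
Proof. by move/(f_equal (@projT1 _ _)) => [-> ->]. Qed.

Lemma htag_castHom X X' Y Y' (e1 : X = X') (e2 : Y = Y') (f : Hom X Y) :
  htag (castHom e1 e2 f) = htag f.
Proof. by case: X' / e1; case: Y' / e2. Qed.

Lemma htag_castL X X' Y (e : X = X') (f : Hom X Y) : htag (castL e f) = htag f.
Proof. by case: X' / e. Qed.

Lemma htag_comp X Y Z X' Y' Z' (g : Hom Y Z) (f : Hom X Y) (g' : Hom Y' Z') (f' : Hom X' Y') :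
  htag g = htag g' -> htag f = htag f' -> htag (comp g f) = htag (comp g' f').
Proof.
move=> hg hf; case: (htag_obj hg) (htag_obj hf) => e1 e2 [e3 _]; subst.
by rewrite (htag_inj hg) (htag_inj hf).
Qed.

Lemma htag_hadd X Y X' Y' (f g : Hom X Y) (f' g' : Hom X' Y') :
  htag f = htag f' -> htag g = htag g' -> htag (hadd f g) = htag (hadd f' g').
Proof.
by move=> hf hg; case: (htag_obj hf) => e1 e2; subst; rewrite (htag_inj hf) (htag_inj hg).
Qed.

Lemma htag_hopp X Y X' Y' (f : Hom X Y) (f' : Hom X' Y') :
  htag f = htag f' -> htag (hopp f) = htag (hopp f').
Proof. by move=> hf; case: (htag_obj hf) => e1 e2; subst; rewrite (htag_inj hf). Qed.

Lemma htag_hzero X Y X' Y' : X = X' -> Y = Y' -> htag (@hzero C X Y) = htag (@hzero C X' Y').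
Proof. by move=> -> ->. Qed.

Lemma htag_idm X X' : X = X' -> htag (idm X) = htag (idm X').
Proof. by move=> ->. Qed.

Lemma htag_hzeroP X Y X' Y' (f : Hom X Y) : htag f = htag (@hzero C X' Y') -> f = hzero.
Proof. by move=> h; case: (htag_obj h) => e1 e2; subst; apply: htag_inj. Qed.

Lemma htag_sigT B Y Y' (a : Hom Y B) (a' : Hom Y' B) :
  htag a = htag a' -> existT (fun Y => Hom Y B) Y a = existT (fun Y => Hom Y B) Y' a'.
Proof. by move=> h; case: (htag_obj h) => e _; subst; rewrite (htag_inj h). Qed.

Lemma castL_hzero X X' Y (e : X = X') : castL e (@hzero C X Y) = hzero.
Proof. by case: X' / e. Qed.

End TaggedHom.

(** * Modules over a category with abelian hom-groups *)

Definition homgroup (D : precat_data) : Prop :=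
  forall X Y : Obj D,
    [/\ associative (@hadd D X Y), commutative (@hadd D X Y),
        left_id (@hzero D X Y) (@hadd D X Y)
      & left_inverse (@hzero D X Y) (@hopp D X Y) (@hadd D X Y)].

Section HomGroup.
Variables (D : precat_data) (Dg : homgroup D).

Lemma hg_addA X Y : associative (@hadd D X Y). Proof. by case: (Dg X Y). Qed.
Lemma hg_addC X Y : commutative (@hadd D X Y). Proof. by case: (Dg X Y). Qed.
Lemma hg_add0 X Y : left_id hzero (@hadd D X Y). Proof. by case: (Dg X Y). Qed.
Lemma hg_addN X Y : left_inverse hzero (@hopp D X Y) (@hadd D X Y). Proof. by case: (Dg X Y). Qed.

Definition HG (X Y : Obj D) : abgroup :=
  @AbGroup (Hom X Y) hadd hzero hopp (@hg_addA X Y) (@hg_addC X Y) (@hg_add0 X Y) (@hg_addN X Y).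

Definition rep (B : Obj D) : module D :=
  @Module D (fun X => HG X B) (fun X Y (f : Hom X Y) (g : Hom Y B) => comp g f).

End HomGroup.

Section Span.
Variables (D : precat_data) (M : module D).
Local Notation act := (@mod_act D M _ _).
Local Notation MO := (mod_obj M).

Inductive span (I : Type) (g : I -> {X : Obj D & MO X}) : forall X : Obj D, MO X -> Prop :=
| span0 X : span g (@ag_zero (MO X))
| spanD X (x y : MO X) : span g x -> span g y -> span g (ag_add x y)
| spanN X (x : MO X) : span g x -> span g (ag_opp x)
| span_gen i : span g (projT2 (g i))
| span_act X Y (f : Hom X Y) (y : MO Y) : span g y -> span g (act f y).

Definition generates (N : forall X, MO X -> Prop) (I : Type) (g : I -> {X : Obj D & MO X}) :=
  (forall i, N _ (projT2 (g i))) /\ (forall X x, N X x -> span g x).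

Definition fin_generated (N : forall X, MO X -> Prop) : Prop :=
  exists (I : finType) (g : I -> {X : Obj D & MO X}), generates N g.

Lemma span_trans I J (g : I -> {X : Obj D & MO X}) (h : J -> {X : Obj D & MO X}) X (x : MO X) :
  (forall i, span h (projT2 (g i))) -> span g x -> span h x.
Proof.
by move=> hg; elim=> *; [apply: span0|apply: spanD|apply: spanN|apply: hg|apply: span_act].
Qed.

Lemma span_min (N : forall X, MO X -> Prop) I (g : I -> {X : Obj D & MO X}) X (x : MO X) :
  is_submodule N -> (forall i, N _ (projT2 (g i))) -> span g x -> N X x.
Proof. by case=> h0 hD hN hact hg; elim=> *; auto. Qed.

Lemma span_sum I (g : I -> {X : Obj D & MO X}) X J (r : seq J) (F : J -> MO X) :
  (forall j, span g (F j)) -> span g (\big[ag_add/ag_zero]_(j <- r) F j).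
Proof. by move=> h; elim/big_rec: _ => [|j x _]; [apply: span0|apply: spanD]. Qed.

Lemma span_submodule I (g : I -> {X : Obj D & MO X}) : is_submodule (span g).
Proof. by split=> *; [apply: span0|apply: spanD|apply: spanN|apply: span_act]. Qed.

Section Submodule.
Variables (S : forall X, MO X -> Prop) (hS : is_submodule S).
Arguments S : clear implicits.

Lemma submod0 X : S X ag_zero.
Proof. by case: hS. Qed.

Lemma submodD X (x y : MO X) : S X x -> S X y -> S X (ag_add x y).
Proof. by case: hS => _ h _ _; apply: h. Qed.

Lemma submodN X (x : MO X) : S X x -> S X (ag_opp x).
Proof. by case: hS => _ _ h _; apply: h. Qed.

Lemma submod_act X Y (f : Hom X Y) (y : MO Y) : S Y y -> S X (act f y).
Proof. by case: hS => _ _ _ h; apply: h. Qed.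

End Submodule.

End Span.

Section ModuleTheory.
Variables (D : precat_data) (Dg : homgroup D) (M : module D) (Mm : is_module M).
Local Notation act := (@mod_act D M _ _).
Local Notation MO := (mod_obj M).

Lemma act_addr X Y (f : Hom X Y) (y1 y2 : MO Y) :
  act f (ag_add y1 y2) = ag_add (act f y1) (act f y2).
Proof. by case: Mm. Qed.

Lemma act_addl X Y (f g : Hom X Y) (y : MO Y) : act (hadd f g) y = ag_add (act f y) (act g y).
Proof. by case: Mm. Qed.

Lemma act_comp X Y Z (g : Hom Y Z) (f : Hom X Y) (z : MO Z) :
  act (comp g f) z = act f (act g z).
Proof. by case: Mm. Qed.

Lemma act_id X (x : MO X) : act (idm X) x = x.
Proof. by case: Mm. Qed.

Lemma act_0r X Y (f : Hom X Y) : act f ag_zero = ag_zero.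
Proof. by apply: ag_idem0; rewrite -act_addr ag_add0. Qed.

Lemma act_0l X Y (y : MO Y) : act (@hzero D X Y) y = ag_zero.
Proof. by apply: ag_idem0; rewrite -act_addl (hg_add0 Dg). Qed.

Lemma act_oppl X Y (f : Hom X Y) (y : MO Y) : act (hopp f) y = ag_opp (act f y).
Proof. by apply: ag_opp_uniq; rewrite -act_addl (hg_addN Dg) act_0l. Qed.

Lemma act_oppr X Y (f : Hom X Y) (y : MO Y) : act f (ag_opp y) = ag_opp (act f y).
Proof. by apply: ag_opp_uniq; rewrite -act_addr ag_addN act_0r. Qed.

Lemma act_sumr X Y (f : Hom X Y) I (r : seq I) (F : I -> MO Y) :
  act f (\big[ag_add/ag_zero]_(i <- r) F i) = \big[ag_add/ag_zero]_(i <- r) act f (F i).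
Proof. exact: (big_morph (act f) (act_addr f) (act_0r f)). Qed.

Definition delta_hom n (B : 'I_n -> Obj D) (i k : 'I_n) : Hom (B i) (B k) :=
  match i =P k with
  | ReflectT e => match e in _ = k0 return Hom (B i) (B k0) with erefl => idm (B i) end
  | ReflectF _ => hzero
  end.

Lemma delta_hom_id n (B : 'I_n -> Obj D) i : delta_hom B i i = idm (B i).
Proof. by rewrite /delta_hom; case: eqP => // e; rewrite (eq_irrelevance e erefl). Qed.

Lemma delta_hom_ne n (B : 'I_n -> Obj D) i k : i != k -> delta_hom B i k = hzero.
Proof. by rewrite /delta_hom; case: eqP. Qed.

Section OrdinalFamily.
Variables (n : nat) (g : 'I_n -> {X : Obj D & MO X}).

Definition span_eta X (fs : forall k, Hom X (projT1 (g k))) : MO X :=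
  \big[ag_add/ag_zero]_(k < n) act (fs k) (projT2 (g k)).

Lemma span_etaD X (fs gs : forall k, Hom X (projT1 (g k))) :
  span_eta (fun k => hadd (fs k) (gs k)) = ag_add (span_eta fs) (span_eta gs).
Proof. by rewrite /span_eta -big_split; apply: eq_bigr => k _; rewrite act_addl. Qed.

Lemma span_eta_comp X Y (h : Hom X Y) (fs : forall k, Hom Y (projT1 (g k))) :
  span_eta (fun k => comp (fs k) h) = act h (span_eta fs).
Proof. by rewrite /span_eta act_sumr; apply: eq_bigr => k _; rewrite act_comp. Qed.

Lemma span_eta_span X (fs : forall k, Hom X (projT1 (g k))) : span g (span_eta fs).
Proof. by apply: span_sum => k; apply/span_act/span_gen. Qed.

Lemma span_etaP X (x : MO X) : span g x -> exists fs, span_eta fs = x.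
Proof.
elim=> {X x} [X|X x y _ [fs <-] _ [gs <-]|X x _ [fs <-]|i|X Y f y _ [fs <-]].
- by exists (fun k => hzero); rewrite /span_eta big1 // => k _; apply: act_0l.
- by exists (fun k => hadd (fs k) (gs k)); rewrite span_etaD.
- exists (fun k => hopp (fs k)).
  by rewrite /span_eta ag_opp_sum; apply: eq_bigr => k _; rewrite act_oppl.
- exists (delta_hom (fun k => projT1 (g k)) i).
  rewrite /span_eta (bigD1 i) //= delta_hom_id act_id big1 ?ag_addr0 // => k hk.
  by rewrite delta_hom_ne ?act_0l // eq_sym.
- by exists (fun k => comp (fs k) f); rewrite span_eta_comp.
Qed.

Lemma fg_sub_of_generates (N : forall X, MO X -> Prop) :
  is_submodule N -> generates N g -> fg_sub N.
Proof.
move=> hN [gN hspan]; exists n, (fun k => projT1 (g k)), span_eta; split.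
- exact: span_etaD.
- exact: span_eta_comp.
- move=> X x; split; first by move/hspan/span_etaP.
  by case=> fs <-; apply: (span_min hN gN); apply: span_eta_span.
Qed.

End OrdinalFamily.

Lemma generates_enum (I : finType) (g : I -> {X : Obj D & MO X}) (N : forall X, MO X -> Prop) :
  generates N g -> generates N (fun k : 'I_#|I| => g (enum_val k)).
Proof.
case=> gN hspan; split=> [k|X x /hspan]; first exact: gN.
apply: span_trans => i; rewrite -[g i](congr1 g (enum_rankK i)).
exact: (span_gen (fun k : 'I_#|I| => g (enum_val k))).
Qed.

Hypothesis comp_idl : forall X Y : Obj D, forall (f : Hom X Y), comp (idm Y) f = f.
Hypothesis comp_0l : forall X Y Z : Obj D, forall (f : Hom X Y), comp (@hzero D Y Z) f = hzero.

Lemma generates_of_fg_sub (N : forall X, MO X -> Prop) :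
  fg_sub N -> exists n (g : 'I_n -> {X : Obj D & MO X}), generates N g.
Proof.
case=> n [B [eta [etaD eta_comp etaP]]].
exists n, (fun k => existT _ (B k) (eta (B k) (delta_hom B k))); split.
  by move=> k; apply/etaP; exists (delta_hom B k).
move=> X x /etaP [fs <-].
have eta0 : eta X (fun k => hzero) = ag_zero.
  apply: ag_idem0; rewrite -etaD; congr eta.
  by apply: functional_extensionality_dep => k; apply: hg_add0.
have eta_sum (r : seq 'I_n) (F : 'I_n -> forall k, Hom X (B k)) :
    eta X (fun k => \big[@ag_add (HG Dg X (B k))/ag_zero]_(i <- r) F i k)
    = \big[ag_add/ag_zero]_(i <- r) eta X (F i).
  elim: r => [|i r IH]; [rewrite big_nil -eta0|rewrite big_cons -IH -etaD]; congr eta;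
    by apply: functional_extensionality_dep => k; rewrite ?big_nil ?big_cons.
have -> : fs = (fun k => \big[@ag_add (HG Dg X (B k))/ag_zero]_(i <- enum 'I_n)
                            comp (delta_hom B i k) (fs i)).
  apply: functional_extensionality_dep => k.
  rewrite big_enum (bigD1 k) // delta_hom_id comp_idl big1.
    exact: esym (@ag_addr0 (HG Dg X (B k)) (fs k)).
  by move=> i hi; rewrite delta_hom_ne ?comp_0l.
rewrite eta_sum; apply: span_sum => i; rewrite eta_comp; apply: span_act.
exact: (span_gen (fun k => existT _ (B k) (eta (B k) (delta_hom B k))) i).
Qed.

Lemma fg_subP (N : forall X, MO X -> Prop) : is_submodule N -> fg_sub N <-> fin_generated N.
Proof.
move=> hN; split=> [/generates_of_fg_sub [n [g hg]]|[I [g /generates_enum hg]]].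
- by exists 'I_n, g.
- exact: fg_sub_of_generates hg.
Qed.

End ModuleTheory.

(** * Noetherianity from ideals *)

Section IdealCriterion.
Variables (D : precat_data) (Dg : homgroup D).

Definition ideals_fin_generated : Prop :=
  forall (B : Obj D) (J : forall X, Hom X B -> Prop),
    is_submodule (M := rep Dg B) J -> fin_generated (M := rep Dg B) J.

Variables (M : module D) (Mm : is_module M).
Variables (N : forall X, mod_obj M X -> Prop) (hN : is_submodule N).
Arguments N : clear implicits.
Local Notation act := (@mod_act D M _ _).
Local Notation MO := (mod_obj M).

Section FirstGenerator.
Variables (n : nat) (g : 'I_n.+1 -> {X : Obj D & MO X}).
Local Notation B0 := (projT1 (g ord0)).
Local Notation m0 := (projT2 (g ord0)).
Local Notation tail := (fun i : 'I_n => g (lift ord0 i)).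

Lemma span_tail X (x : MO X) : span tail x -> span g x.
Proof. by apply: span_trans => i; apply: (span_gen g). Qed.

Lemma span_ord0P X (x : MO X) :
  span g x -> exists (f : Hom X B0) y, span tail y /\ x = ag_add (act f m0) y.
Proof.
elim=> {X x} [X|X x y _ [f1 [y1 [h1 ->]]] _ [f2 [y2 [h2 ->]]]|X x _ [f [y [h ->]]]|i|].
- exists hzero, ag_zero; split; first exact: span0.
  by rewrite act_0l // ag_add0.
- exists (hadd f1 f2), (ag_add y1 y2); split; first exact: spanD.
  by rewrite act_addl // ag_addACA.
- exists (hopp f), (ag_opp y); split; first exact: spanN.
  by rewrite act_oppl // ag_oppD.
- case: (unliftP ord0 i) => [j|] ->.
    exists hzero, (projT2 (g (lift ord0 j))); split; first exact: (span_gen tail j).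
    by rewrite act_0l // ag_add0.
  exists (idm _), ag_zero; split; first exact: span0.
  by rewrite act_id // ag_addr0.
- move=> X Y h _ _ [f [y [hy ->]]]; exists (comp f h), (act h y); split.
    exact: span_act.
  by rewrite act_addr // act_comp.
Qed.

Definition coef_ideal X (f : Hom X B0) : Prop :=
  exists y : MO X, span tail y /\ N X (ag_add (act f m0) y).

Lemma coef_ideal_submodule : is_submodule (M := rep Dg B0) coef_ideal.
Proof.
case: hN => N0 ND NN Nact; split.
- move=> X; exists ag_zero; split; first exact: span0.
  by rewrite act_0l // ag_add0.
- move=> X f1 f2 [y1 [h1 n1]] [y2 [h2 n2]]; exists (ag_add y1 y2); split.
    exact: spanD.
  by rewrite /= act_addl // ag_addACA; apply: ND.
- move=> X f [y [h nf]]; exists (ag_opp y); split; first exact: spanN.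
  by rewrite /= act_oppl // -ag_oppD; apply: NN.
- move=> X Y h f [y [hy nf]]; exists (act h y); split; first exact: span_act.
  by rewrite /= act_comp // -act_addr //; apply: Nact.
Qed.

Lemma coef_ideal_lift (I : finType) (h : I -> {X : Obj D & Hom X B0}) :
  generates (M := rep Dg B0) coef_ideal h ->
  exists h' : I -> {X : Obj D & MO X},
    (forall i, N _ (projT2 (h' i)) /\ span g (projT2 (h' i))) /\
    forall X (f : Hom X B0), span (M := rep Dg B0) h f ->
      exists z, span h' z /\ span tail (ag_add z (ag_opp (act f m0))).
Proof.
case=> hJ _; pose y i := proj1_sig (constructive_indefinite_description _ (hJ i)).
have y_spec i : span tail (y i) /\ N _ (ag_add (act (projT2 (h i)) m0) (y i)).
  exact: (proj2_sig (constructive_indefinite_description _ (hJ i))).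
exists (fun i => existT _ (projT1 (h i)) (ag_add (act (projT2 (h i)) m0) (y i))); split.
  move=> i; split; first exact: (y_spec i).2.
  by apply: spanD; [apply/span_act/span_gen|apply/span_tail/(y_spec i).1].
move=> X f; elim=> {X f} [X|X f1 f2 _ [z1 [h1 h1']] _ [z2 [h2 h2']]|X f _ [z [hz hz']]|i|].
- exists ag_zero; split; first exact: span0.
  by rewrite act_0l // ag_opp0 ag_add0; apply: span0.
- exists (ag_add z1 z2); split; first exact: spanD.
  by rewrite /= act_addl // ag_oppD ag_addACA; apply: spanD.
- exists (ag_opp z); split; first exact: spanN.
  by rewrite /= act_oppl // -ag_oppD; apply: spanN.
- exists (ag_add (act (projT2 (h i)) m0) (y i)); split; first exact: (span_gen _ i).
  rewrite [ag_add (act _ _) _]ag_addC -ag_addA ag_addrN ag_addr0; exact: (y_spec i).1.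
- move=> X Y k f _ [z [hz hz']]; exists (act k z); split; first exact: span_act.
  by rewrite /= act_comp // -act_oppr // -act_addr //; apply: span_act.
Qed.

End FirstGenerator.

Hypothesis ideals_fg : ideals_fin_generated.

Lemma fin_generated_meet_span n (g : 'I_n -> {X : Obj D & MO X}) :
  fin_generated (fun X (x : MO X) => N X x /\ span g x).
Proof.
elim: n g => [|n IH] g.
  exists 'I_0, g; split=> [[]//|X x [_ hx]].
  by apply: span_trans hx => -[].
have [I1 [h1 h1gen]] := ideals_fg (coef_ideal_submodule g).
have [G1 [G1N key]] := coef_ideal_lift h1gen.
have [I2 [G2 [G2N G2span]]] := IH (fun i => g (lift ord0 i)).
pose G (s : (I1 + I2)%type) := match s with inl i => G1 i | inr j => G2 j end.
have G1G X (x : MO X) : span G1 x -> span G x.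
  by apply: span_trans => i; apply: (span_gen G (inl i)).
have G2G X (x : MO X) : span G2 x -> span G x.
  by apply: span_trans => i; apply: (span_gen G (inr i)).
exists (I1 + I2)%type, G; split.
  by case=> [i|j] /=; [apply: G1N|case: (G2N j) => ? /span_tail].
move=> X x [Nx /span_ord0P [f [y [hy ex]]]].
have /key [z [hz hzf]] : span (M := rep Dg _) h1 f.
  by apply: h1gen.2; exists y; rewrite -ex.
have zN : N X z by apply: (span_min hN (fun i => (G1N i).1)) hz.
rewrite -(ag_subK x z) ag_addC; apply: spanD; first exact: G1G.
apply/G2G/G2span; split; first by apply: (submodD hN) => //; apply: (submodN hN).
have -> : ag_add x (ag_opp z) = ag_add y (ag_opp (ag_add z (ag_opp (act f (projT2 (g ord0)))))).
  rewrite ex ag_oppD ag_oppK [ag_add (act _ _) y]ag_addC -!ag_addA; congr ag_add.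
  by rewrite ag_addC.
by apply: spanD => //; apply: spanN.
Qed.

End IdealCriterion.

Lemma noetherian_of_ideals (D : precat_data) (Dg : homgroup D) :
  (forall X Y : Obj D, forall f : Hom X Y, comp (idm Y) f = f) ->
  (forall X Y Z : Obj D, forall f : Hom X Y, comp (@hzero D Y Z) f = hzero) ->
  ideals_fin_generated Dg -> noetherian D.
Proof.
move=> comp_idl comp_0l ideals_fg M Mm Mfg N hN.
have [n [g [_ gspan]]] := generates_of_fg_sub Dg comp_idl comp_0l Mfg.
apply/(fg_subP Dg Mm comp_idl comp_0l hN).
have [I [h [hN' hspan]]] := fin_generated_meet_span Mm hN ideals_fg g.
exists I, h; split=> [i|X x Nx]; first exact: (hN' i).1.
by apply: hspan; split => //; apply: gspan.
Qed.

Section SubAbGroup.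
Variables (A : abgroup) (S : A -> Prop).
Hypotheses (S0 : S ag_zero) (SD : forall x y, S x -> S y -> S (ag_add x y))
  (SN : forall x, S x -> S (ag_opp x)).

Lemma sub_abgroup_inj (x y : {x : A | S x}) : proj1_sig x = proj1_sig y -> x = y.
Proof. by case: x y => [x hx] [y hy] /= e; subst; congr exist; apply: proof_irrelevance. Qed.

Definition sub_add (x y : {x : A | S x}) : {x : A | S x} :=
  exist _ (ag_add (proj1_sig x) (proj1_sig y)) (SD (proj2_sig x) (proj2_sig y)).
Definition sub_opp (x : {x : A | S x}) : {x : A | S x} :=
  exist _ (ag_opp (proj1_sig x)) (SN (proj2_sig x)).
Definition sub_zero : {x : A | S x} := exist _ ag_zero S0.

Lemma sub_addA : associative sub_add.
Proof. by move=> x y z; apply: sub_abgroup_inj; apply: ag_addA. Qed.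
Lemma sub_addC : commutative sub_add.
Proof. by move=> x y; apply: sub_abgroup_inj; apply: ag_addC. Qed.
Lemma sub_add0 : left_id sub_zero sub_add.
Proof. by move=> x; apply: sub_abgroup_inj; apply: ag_add0. Qed.
Lemma sub_addN : left_inverse sub_zero sub_opp sub_add.
Proof. by move=> x; apply: sub_abgroup_inj; apply: ag_addN. Qed.

Definition sub_abgroup : abgroup :=
  @AbGroup {x : A | S x} sub_add sub_zero sub_opp sub_addA sub_addC sub_add0 sub_addN.

End SubAbGroup.

Section SubModule.
Variables (D : precat_data) (M : module D).
Variables (S : forall X, mod_obj M X -> Prop) (hS : is_submodule S).
Arguments S : clear implicits.
Local Notation act := (@mod_act D M _ _).

Definition sub_obj (X : Obj D) : abgroup :=
  sub_abgroup (submod0 hS X) (submodD hS (X := X)) (submodN hS (X := X)).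

Lemma sub_obj_actP X Y (f : Hom X Y) (y : sub_obj Y) : S X (act f (proj1_sig y)).
Proof. exact/(submod_act hS)/(proj2_sig y). Qed.

Definition sub_module : module D :=
  @Module D sub_obj (fun X Y f y => exist _ (act f (proj1_sig y)) (sub_obj_actP f y) : sub_obj X).

End SubModule.

Section SubModuleTheory.
Variables (D : precat_data) (Dg : homgroup D) (M : module D) (Mm : is_module M).
Variables (S : forall X, mod_obj M X -> Prop) (hS : is_submodule S).
Arguments S : clear implicits.
Local Notation MO := (mod_obj M).
Local Notation MS := (sub_module hS).

Lemma sub_module_is_module : is_module MS.
Proof.
case: Mm => actD actDl act_comp act_id.
by split=> *; apply: sub_abgroup_inj; [apply: actD|apply: actDl|apply: act_comp|apply: act_id].
Qed.

Lemma sub_module_fg n (g : 'I_n -> {X : Obj D & MO X}) : generates S g -> fg_module MS.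
Proof.
case=> gS gspan.
pose eta X (fs : forall k, Hom X (projT1 (g k))) : mod_obj MS X :=
  exist _ (span_eta fs) (span_min hS gS (span_eta_span fs)).
exists n, (fun k => projT1 (g k)), eta; split.
- by move=> X fs gs; apply: sub_abgroup_inj; apply: span_etaD.
- by move=> X Y h fs; apply: sub_abgroup_inj; apply: span_eta_comp.
- move=> X x; split=> // _.
  have [fs efs] := span_etaP Dg Mm (gspan _ _ (proj2_sig x)).
  by exists fs; apply: sub_abgroup_inj.
Qed.

Lemma span_sub_module I (h : I -> {X : Obj D & mod_obj MS X}) X (x : mod_obj MS X) :
  span h x -> span (fun i => existT _ (projT1 (h i)) (proj1_sig (projT2 (h i)))) (proj1_sig x).
Proof.
by elim=> {X x} *; [apply: span0|apply: spanD|apply: spanN|apply: (span_gen _ _)|apply: span_act].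
Qed.

Hypothesis comp_idl : forall X Y : Obj D, forall f : Hom X Y, comp (idm Y) f = f.
Hypothesis comp_0l : forall X Y Z : Obj D, forall f : Hom X Y, comp (@hzero D Y Z) f = hzero.

Lemma noetherian_meet (N : forall X, MO X -> Prop) : noetherian D ->
  is_submodule N -> fin_generated S -> fin_generated (fun X x => N X x /\ S X x).
Proof.
move=> Dn hN /= [I [g /generates_enum gen]].
pose N' X (x : mod_obj MS X) := N X (proj1_sig x).
have hN' : is_submodule N'.
  by case: hN => N0 ND NN Nact; split=> *; [apply: N0|apply: ND|apply: NN|apply: Nact].
have /(fg_subP Dg sub_module_is_module comp_idl comp_0l hN') [K [h [hN'h hspan]]] :=
  Dn _ sub_module_is_module (sub_module_fg gen) _ hN'.
exists K, (fun k => existT _ (projT1 (h k)) (proj1_sig (projT2 (h k)))); split.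
  by move=> k; split; [apply: hN'h|apply: (proj2_sig (projT2 (h k)))].
move=> X x [Nx Sx]; apply: (span_sub_module (x := exist _ x Sx)).
exact: hspan.
Qed.

End SubModuleTheory.

(** * Preadditive categories and their automorphisms *)

Lemma preadditive_homgroup (C : precat_data) : preadditive C -> homgroup C.
Proof. by case. Qed.

Section Preadditive.
Variables (C : precat_data) (Cpa : preadditive C).
Local Notation Cg := (preadditive_homgroup Cpa).

HB.instance Definition _ (X Y : Obj C) :=
  Monoid.isComLaw.Build (Hom X Y) hzero (@hadd C X Y)
    (hg_addA Cg (X:=X) (Y:=Y)) (hg_addC Cg (X:=X) (Y:=Y)) (hg_add0 Cg (X:=X) (Y:=Y)).

Implicit Types X Y Z : Obj C.

Lemma hadd0f X Y (f : Hom X Y) : hadd hzero f = f.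
Proof. exact: (hg_add0 Cg). Qed.

Lemma haddNf X Y (f : Hom X Y) : hadd (hopp f) f = hzero.
Proof. exact: (hg_addN Cg). Qed.

Lemma hopp0 X Y : hopp (@hzero C X Y) = hzero.
Proof. exact: (@ag_opp0 (HG Cg X Y)). Qed.

Lemma comp_assoc W X Y Z (h : Hom Y Z) (g : Hom X Y) (f : Hom W X) :
  comp h (comp g f) = comp (comp h g) f.
Proof. by case: Cpa => _ hA _ _ _; apply: hA. Qed.

Lemma comp_idl X Y (f : Hom X Y) : comp (idm Y) f = f.
Proof. by case: Cpa => _ _ h1 _ _; case: (h1 X Y f). Qed.

Lemma comp_idr X Y (f : Hom X Y) : comp f (idm X) = f.
Proof. by case: Cpa => _ _ h1 _ _; case: (h1 X Y f). Qed.

Lemma comp_haddl X Y Z (g1 g2 : Hom Y Z) (f : Hom X Y) :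
  comp (hadd g1 g2) f = hadd (comp g1 f) (comp g2 f).
Proof. by case: Cpa => _ _ _ hD _; apply: hD. Qed.

Lemma comp_haddr X Y Z (g : Hom Y Z) (f1 f2 : Hom X Y) :
  comp g (hadd f1 f2) = hadd (comp g f1) (comp g f2).
Proof. by case: Cpa => _ _ _ _ hD; apply: hD. Qed.

Lemma comp_0l X Y Z (f : Hom X Y) : comp (@hzero C Y Z) f = hzero.
Proof. by apply: (@ag_idem0 (HG Cg X Z)) => /=; rewrite -comp_haddl hadd0f. Qed.

Lemma comp_0r X Y Z (g : Hom Y Z) : comp g (@hzero C X Y) = hzero.
Proof. by apply: (@ag_idem0 (HG Cg X Z)) => /=; rewrite -comp_haddr hadd0f. Qed.

Lemma rep_is_module B : is_module (rep Cg B).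
Proof.
split=> *; [exact: comp_haddl|exact: comp_haddr|exact: comp_assoc|exact: comp_idr].
Qed.

Lemma rep_fg B : fg_module (rep Cg B).
Proof.
exists 1%N, (fun _ => B), (fun X (fs : 'I_1 -> Hom X B) => fs ord0); split=> // X x.
by split=> // _; exists (fun _ => x).
Qed.

Section Automorphism.
Variables (P : autom_data C) (Pa : is_automorphism P).

Lemma F1_idm X : F1 P (idm X) = idm (F0 P X).
Proof. by case: Pa. Qed.

Lemma F1_hadd X Y (f g : Hom X Y) : F1 P (hadd f g) = hadd (F1 P f) (F1 P g).
Proof. by case: Pa. Qed.

Lemma htag_F1 X Y X' Y' (f : Hom X Y) (f' : Hom X' Y') :
  htag f = htag f' -> htag (F1 P f) = htag (F1 P f').
Proof. by move=> hf; case: (htag_obj hf) => e1 e2; subst; rewrite (htag_inj hf). Qed.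

Lemma htag_G1 X Y X' Y' (f : Hom X Y) (f' : Hom X' Y') :
  htag f = htag f' -> htag (G1 P f) = htag (G1 P f').
Proof. by move=> hf; case: (htag_obj hf) => e1 e2; subst; rewrite (htag_inj hf). Qed.

Lemma htag_GF1 X Y (f : Hom X Y) : htag (G1 P (F1 P f)) = htag f.
Proof. by case: Pa => _ _ _ GF1 _; rewrite -{2}(GF1 _ _ f) htag_castHom. Qed.

Lemma htag_FG1 X Y (f : Hom X Y) : htag (F1 P (G1 P f)) = htag f.
Proof. by case: Pa => _ _ _ _ FG1; rewrite -{2}(FG1 _ _ f) htag_castHom. Qed.

Lemma F1_inj X Y : injective (@F1 C P X Y).
Proof. by move=> f g h; apply: htag_inj; rewrite -htag_GF1 h htag_GF1. Qed.

Lemma F1_hzero X Y : F1 P (@hzero C X Y) = hzero.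
Proof. by apply: (@ag_idem0 (HG Cg _ _)) => /=; rewrite -F1_hadd hadd0f. Qed.

Lemma G1_idm X : G1 P (idm X) = idm (G0 P X).
Proof.
by apply: F1_inj; apply: htag_inj; rewrite htag_FG1 F1_idm; apply: htag_idm; rewrite FG.
Qed.

Lemma G1_hzero X Y : G1 P (@hzero C X Y) = hzero.
Proof.
by apply: F1_inj; apply: htag_inj; rewrite htag_FG1 F1_hzero; apply: htag_hzero; rewrite FG.
Qed.

Lemma F1_surj U V (a : Hom (F0 P U) (F0 P V)) : exists f : Hom U V, F1 P f = a.
Proof.
exists (castHom (GF P U) (GF P V) (G1 P a)); apply: htag_inj.
by rewrite -(htag_FG1 a); apply: htag_F1; rewrite htag_castHom.
Qed.

Lemma G1_surj U V (a : Hom (G0 P U) (G0 P V)) : exists f : Hom U V, G1 P f = a.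
Proof.
exists (castHom (FG P U) (FG P V) (F1 P a)); apply: htag_inj.
by rewrite -(htag_GF1 a); apply: htag_G1; rewrite htag_castHom.
Qed.

Lemma phiM_surj (j : int) X Y (a : Hom (phi P j X) (phi P j Y)) :
  exists f : Hom X Y, phiM P j f = a.
Proof.
have itF k (b : Hom (iter k (F0 P) X) (iter k (F0 P) Y)) : exists f, itF1 P k f = b.
  elim: k b => [|k IH] b; first by exists b.
  by have [f1 <-] := F1_surj b; have [f <-] := IH f1; exists f.
have itG k (b : Hom (iter k (G0 P) X) (iter k (G0 P) Y)) : exists f, itG1 P k f = b.
  elim: k b => [|k IH] b; first by exists b.
  by have [f1 <-] := G1_surj b; have [f <-] := IH f1; exists f.
by case: j a => n a; [apply: itF|apply: itG].
Qed.

Lemma phiM_idm (j : int) X : phiM P j (idm X) = idm (phi P j X).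
Proof.
have itF k : itF1 P k (idm X) = idm _ by elim: k => //= k ->; rewrite F1_idm.
have itG k : itG1 P k (idm X) = idm _ by elim: k => //= k ->; rewrite G1_idm.
by case: j => n; [apply: itF|apply: itG].
Qed.

Lemma phiM_hzero (j : int) X Y : phiM P j (@hzero C X Y) = hzero.
Proof.
have itF k : itF1 P k (@hzero C X Y) = hzero by elim: k => //= k ->; rewrite F1_hzero.
have itG k : itG1 P k (@hzero C X Y) = hzero by elim: k => //= k ->; rewrite G1_hzero.
by case: j => n; [apply: itF|apply: itG].
Qed.

Lemma phi_inj (j : int) X X' : phi P j X = phi P j X' -> X = X'.
Proof. by move=> h; rewrite -[X](phi_comp P j 0) -[X'](phi_comp P j 0) h. Qed.

Lemma phiNK (j : int) Y : phi P j (phi P (- j) Y) = Y.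
Proof. by have := phi_comp P (- j) 0 Y; rewrite sub0r opprK. Qed.

(** * Twisted polynomial categories *)

Section TwistedCat.
Variable kd : tw_kind.
Local Notation th := (thom P kd).

Lemma thom_ext A B (f g : th A B) : (forall i, tfun f i = tfun g i) -> f = g.
Proof.
case: f g => f fN fA [g gN gA] /= h.
have e : f = g by apply: functional_extensionality_dep.
by subst; congr THom; apply: proof_irrelevance.
Qed.

Lemma tfun_tadd A B (f g : th A B) i : tfun (tadd f g) i = hadd (tfun f i) (tfun g i).
Proof.
rewrite /= /tadd_fun; case: ifP => // /negbT; rewrite negb_and -ltnNge => /orP [h|h].
- by rewrite !tbndP ?hadd0f //; apply: leq_ltn_trans h; rewrite ?leq_maxl ?leq_maxr.
- by rewrite !(tsub _ h) hadd0f.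
Qed.

Lemma tfun_topp A B (f : th A B) i : tfun (topp f) i = hopp (tfun f i).
Proof.
rewrite /= /topp_fun; case: ifP => // /negbT; rewrite negb_and -ltnNge => /orP [h|h].
- by rewrite tbndP ?hopp0.
- by rewrite (tsub _ h) hopp0.
Qed.

Lemma twisted_homgroup : homgroup (twisted P kd).
Proof.
move=> X Y; split.
- by move=> f g h; apply: thom_ext => i; rewrite !tfun_tadd (hg_addA Cg).
- by move=> f g; apply: thom_ext => i; rewrite !tfun_tadd (hg_addC Cg).
- by move=> f; apply: thom_ext => i; rewrite !tfun_tadd hadd0f.
- by move=> f; apply: thom_ext => i; rewrite !tfun_tadd tfun_topp haddNf.
Qed.

Lemma tfun_tcomp_single A B D (g : th B D) (f : th A B) (i0 : int) :
  (forall i, i != i0 -> tfun f i = hzero) -> forall k,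
  tfun (tcomp g f) k =
    castL (phi_comp P i0 k A) (comp (tfun g (k - i0)) (phiM P (k - i0) (tfun f i0))).
Proof.
move=> hf k; rewrite /= /tcomp_fun (big_seq_only1 i0 (irange_uniq _)); last first.
  by move=> i hi; rewrite hf // phiM_hzero comp_0r castL_hzero.
case: ifP => // /negbT; rewrite negb_and => /orP [h|].
- have -> : tfun f i0 = hzero.
    by apply: tbndP; rewrite ltnNge; apply: contra h; apply: mem_irangeP.
  by rewrite phiM_hzero comp_0r castL_hzero.
- rewrite /tcomp_pred !negb_and -orbA -ltnNge => /or3P [h|h|h].
  + by rewrite (tsub _ h) phiM_hzero comp_0r castL_hzero.
  + by rewrite (tsub _ h) comp_0l castL_hzero.
  + by rewrite (tbndP h) comp_0l castL_hzero.
Qed.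

Lemma allowed0 : allowed kd 0.
Proof. by case: kd. Qed.

Lemma tfun_tid_ne B (j : int) : j != 0 -> tfun (tid P kd B) j = hzero.
Proof. by case: j => [[|n]|n]. Qed.

Lemma tcomp_idl A B (f : th A B) : tcomp (tid P kd B) f = f.
Proof.
apply: thom_ext => k.
rewrite /= /tcomp_fun (big_seq_only1 k (irange_uniq _)); last first.
  move=> i hi; rewrite tfun_tid_ne ?comp_0l ?castL_hzero //.
  by apply: contra hi; rewrite subr_eq0 eq_sym.
have ek : htag (castL (phi_comp P k k A)
             (comp (tid_fun P B (k - k)) (phiM P (k - k) (tfun f k)))) = htag (tfun f k).
  by rewrite htag_castL subrr /= comp_idl.
case: ifP => [_|/negbT]; first exact: htag_inj.
rewrite negb_and => /orP [h|].
- by symmetry; apply: tbndP; rewrite ltnNge; apply: contra h; apply: mem_irangeP.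
- rewrite /tcomp_pred subrr allowed0 andbT /= leq0n andbT => h.
  by rewrite (tsub _ h).
Qed.

Lemma tcomp_0l A B D (f : th A B) : tcomp (@tzero C P kd B D) f = @tzero C P kd A D.
Proof.
by apply: thom_ext => k; rewrite /= /tcomp_fun big1 // => i _; rewrite comp_0l castL_hzero.
Qed.

Definition castI A B (i j : int) (e : i = j) (c : Hom (phi P i A) B) : Hom (phi P j A) B :=
  match e in _ = j0 return Hom (phi P j0 A) B with erefl => c end.

Definition tmono_fun A B (i0 : int) (c : Hom (phi P i0 A) B) (i : int) : Hom (phi P i A) B :=
  match i0 =P i with ReflectT e => castI e c | ReflectF _ => hzero end.

Lemma tmono_fun_eq A B (i0 : int) (c : Hom (phi P i0 A) B) : tmono_fun c i0 = c.
Proof. by rewrite /tmono_fun; case: eqP => // e; rewrite (eq_irrelevance e erefl). Qed.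

Lemma tmono_fun_ne A B (i0 : int) (c : Hom (phi P i0 A) B) i : i != i0 -> tmono_fun c i = hzero.
Proof. by rewrite /tmono_fun eq_sym; case: eqP. Qed.

Lemma tmono_fin A B (i0 : int) (c : Hom (phi P i0 A) B) :
  exists N : nat, forall i : int, (N < `|i|)%N -> tmono_fun c i = hzero.
Proof.
by exists `|i0|%N => i hi; apply: tmono_fun_ne; apply: contraTneq hi => ->; rewrite ltnn.
Qed.

Lemma tmono_sub A B (i0 : int) (c : Hom (phi P i0 A) B) (h0 : allowed kd i0) i :
  ~~ allowed kd i -> tmono_fun c i = hzero.
Proof. by move=> h; apply: tmono_fun_ne; apply: contraNneq h => ->. Qed.

Definition tmono A B (i0 : int) (c : Hom (phi P i0 A) B) (h0 : allowed kd i0) : th A B :=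
  THom (tmono_fin c) (tmono_sub c h0).

Lemma tfun_tcomp_tmono A B D (g : th B D) (i0 : int) (c : Hom (phi P i0 A) B)
    (h0 : allowed kd i0) k :
  htag (tfun (tcomp g (tmono c h0)) k) = htag (comp (tfun g (k - i0)) (phiM P (k - i0) c)).
Proof.
rewrite (@tfun_tcomp_single _ _ _ _ _ i0) ?htag_castL //= ?tmono_fun_eq // => i.
exact: tmono_fun_ne.
Qed.

End TwistedCat.

(** * The Hilbert basis theorem *)

Section Hilbert.
Variables (kd : tw_kind) (sg : int).
Hypotheses (hsg : sg = 1 \/ sg = -1) (hall : forall i, allowed kd i = (0 <= sg * i)).
Local Notation th := (thom P kd).
Local Notation Tg := (twisted_homgroup (kd := kd)).

Definition sdeg (n : nat) : int := sg * n%:Z.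

Lemma sdeg_allowed n : allowed kd (sdeg n).
Proof. by rewrite hall /sdeg; case: hsg => ->; lia. Qed.

Lemma abs_sdeg n : `|sdeg n|%N = n.
Proof. by rewrite /sdeg; case: hsg => ->; lia. Qed.

Lemma allowed_sdeg i : allowed kd i -> i = sdeg `|i|%N.
Proof. by rewrite hall /sdeg; case: hsg => ->; lia. Qed.

Lemma sdegD a b : sdeg (a + b) = sdeg a + sdeg b.
Proof. by rewrite /sdeg; case: hsg => ->; lia. Qed.

Lemma sdegB a b : (b <= a)%N -> sdeg a - sdeg b = sdeg (a - b).
Proof. by rewrite /sdeg; case: hsg => ->; lia. Qed.

Variables (B : Obj C) (J : forall X, th X B -> Prop).
Hypothesis hJ : is_submodule (M := rep Tg B) J.
Arguments J : clear implicits.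

Definition deg_le X (f : th X B) (n : nat) : Prop :=
  forall m : nat, (n < m)%N -> tfun f (sdeg m) = hzero.

(* [H] is the monomial [c t^(sdeg (d - j))] with [Phi^(sdeg (d - j)) c = b]. *)
Lemma tcomp_shift Xw X (gw : th Xw B) (j d : nat) : (j <= d)%N -> deg_le gw j ->
  forall b : Hom (phi P (sdeg d) X) (phi P (sdeg j) Xw),
  exists H : th X Xw, deg_le (tcomp gw H) d /\
     htag (tfun (tcomp gw H) (sdeg d)) = htag (comp (tfun gw (sdeg j)) b).
Proof.
move=> hjd dgw b; pose k := (d - j)%N.
have eo : phi P (sdeg d) X = phi P (sdeg j) (phi P (sdeg k) X).
  by rewrite phi_add -sdegD subnK.
have [c hc] := phiM_surj (castL eo b).
exists (tmono c (sdeg_allowed k)); split.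
- move=> m hm; apply: htag_hzeroP.
  rewrite tfun_tcomp_tmono (sdegB (_ : (k <= m)%N)); last by rewrite /k; lia.
  by rewrite dgw ?comp_0l //; rewrite /k; lia.
- rewrite tfun_tcomp_tmono sdegB /k; last by lia.
  have -> : (d - (d - j) = j)%N by lia.
  by rewrite hc; apply: htag_comp => //; apply: htag_castL.
Qed.

Definition lead_ideal (n : nat) (Y : Obj C) (a : Hom Y B) : Prop :=
  exists X (g : th X B), [/\ J X g, deg_le g n & htag (tfun g (sdeg n)) = htag a].

Lemma lead_ideal_shift j d Y Y' (a : Hom Y B) (h : Hom Y' Y) :
  (j <= d)%N -> lead_ideal j a -> lead_ideal d (comp a h).
Proof.
move=> hjd [X [g [Jg dg ga]]].
have [H [dH hH]] :=
  tcomp_shift hjd dg (castHom (esym (phiNK (sdeg d) Y')) (esym (htag_obj ga).1) h).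
exists (phi P (- sdeg d) Y'), (tcomp g H); split=> //.
- exact: (submod_act hJ H Jg).
- by rewrite hH; apply: htag_comp => //; apply: htag_castHom.
Qed.

Lemma lead_ideal_mono n m Y (a : Hom Y B) : (n <= m)%N -> lead_ideal n a -> lead_ideal m a.
Proof. by move=> h /(lead_ideal_shift (idm Y) h); rewrite comp_idr. Qed.

Lemma lead_ideal_submodule n : is_submodule (M := rep Cg B) (lead_ideal n).
Proof.
split.
- move=> Y; exists (phi P (- sdeg n) Y), (@tzero C P kd _ B); split=> //.
    exact: (submod0 hJ).
  by apply: htag_hzero => //; apply: phiNK.
- move=> Y a1 a2 [X1 [g1 [J1 d1 h1]]] [X2 [g2 [J2 d2 h2]]].
  have e : X1 = X2 by apply: (@phi_inj (sdeg n)); rewrite (htag_obj h1).1 (htag_obj h2).1.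
  subst X2; exists X1, (tadd g1 g2); split; first exact: (submodD hJ).
  + by move=> m hm; rewrite tfun_tadd d1 // d2 // hadd0f.
  + by rewrite tfun_tadd; apply: htag_hadd.
- move=> Y a [X [g [Jg dg ga]]]; exists X, (topp g); split; first exact: (submodN hJ).
  + by move=> m hm; rewrite tfun_topp dg // hopp0.
  + by rewrite tfun_topp; apply: htag_hopp.
- by move=> Y' Y h a; apply: lead_ideal_shift.
Qed.

Definition lead_union (Y : Obj C) (a : Hom Y B) : Prop := exists n, lead_ideal n a.

Lemma lead_union_submodule : is_submodule (M := rep Cg B) lead_union.
Proof.
split.
- by move=> Y; exists 0%N; apply: (submod0 (lead_ideal_submodule 0)).
- move=> Y a1 a2 [n1 h1] [n2 h2]; exists (maxn n1 n2).
  apply: (submodD (lead_ideal_submodule _)).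
  - exact: lead_ideal_mono (leq_maxl n1 n2) h1.
  - exact: lead_ideal_mono (leq_maxr n1 n2) h2.
- by move=> Y a [n h]; exists n; apply: (submodN (lead_ideal_submodule n)).
- by move=> X Y f a [n h]; exists n; apply: (submod_act (lead_ideal_submodule n)).
Qed.

Hypothesis Cn : noetherian C.

Lemma rep_fin_generated (N : forall Y, Hom Y B -> Prop) :
  is_submodule (M := rep Cg B) N -> fin_generated (M := rep Cg B) N.
Proof.
move=> hN; apply/(fg_subP Cg (rep_is_module B) comp_idl comp_0l hN).
exact: Cn (rep_is_module B) (rep_fg B) N hN.
Qed.

Lemma lead_ideal_stable : exists m, forall n Y (a : Hom Y B), lead_ideal n a -> lead_ideal m a.
Proof.
have [I [G [GL Gspan]]] := rep_fin_generated lead_union_submodule.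
pose n i := proj1_sig (constructive_indefinite_description _ (GL i)).
exists (\max_i n i) => k Y a ha.
apply: (span_min (lead_ideal_submodule _)) (Gspan _ _ (ex_intro _ k ha)) => i.
apply: lead_ideal_mono (leq_bigmax i) _.
exact: proj2_sig (constructive_indefinite_description _ (GL i)).
Qed.

Definition lead (j : nat) (w : {X : Obj C & th X B}) : {Y : Obj C & Hom Y B} :=
  existT _ (phi P (sdeg j) (projT1 w)) (tfun (projT2 w) (sdeg j)).

Lemma lead_ideal_generators j : exists (I : finType) (W : I -> {X : Obj C & th X B}),
  (forall i, J _ (projT2 (W i)) /\ deg_le (projT2 (W i)) j) /\
  forall Y (a : Hom Y B), lead_ideal j a -> span (M := rep Cg B) (fun i => lead j (W i)) a.
Proof.
have [I [G [GL Gspan]]] := rep_fin_generated (lead_ideal_submodule j).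
have GW i : exists w : {X : Obj C & th X B},
    [/\ J _ (projT2 w), deg_le (projT2 w) j & lead j w = G i].
  have [X [g [Jg dg hg]]] := GL i.
  by exists (existT _ X g); split=> //; apply: eq_trans (htag_sigT hg) _; case: (G i).
pose W i := proj1_sig (constructive_indefinite_description _ (GW i)).
have W_spec i : [/\ J _ (projT2 (W i)), deg_le (projT2 (W i)) j & lead j (W i) = G i].
  exact: proj2_sig (constructive_indefinite_description _ (GW i)).
exists I, W; split=> [i|Y a /Gspan]; first by case: (W_spec i).
apply: span_trans => i; case: (W_spec i) => _ _ <-.
exact: (span_gen (M := rep Cg B) (fun i => lead j (W i))).
Qed.

Lemma lead_span_lift j d (I : Type) (W : I -> {X : Obj C & th X B}) :
  (j <= d)%N -> (forall i, J _ (projT2 (W i)) /\ deg_le (projT2 (W i)) j) ->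
  forall Y (a : Hom Y B), span (M := rep Cg B) (fun i => lead j (W i)) a ->
  forall X, phi P (sdeg d) X = Y ->
  exists s : th X B, [/\ span (M := rep Tg B) W s, J X s, deg_le s d
                       & htag (tfun s (sdeg d)) = htag a].
Proof.
move=> hjd hW Y a.
elim=> {Y a} [Y|Y a1 a2 _ IH1 _ IH2|Y a _ IH|i|Y' Y f a _ IH] X eX.
- exists (@tzero C P kd X B); split=> //; [exact: span0|exact: (submod0 hJ)|].
  exact: htag_hzero.
- have [s1 [W1 J1 d1 h1]] := IH1 X eX; have [s2 [W2 J2 d2 h2]] := IH2 X eX.
  exists (tadd s1 s2); split; [exact: spanD|exact: (submodD hJ)| |].
  + by move=> n hn; rewrite tfun_tadd d1 // d2 // hadd0f.
  + by rewrite tfun_tadd; apply: htag_hadd.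
- have [s [Ws Js ds hs]] := IH X eX.
  exists (topp s); split; [exact: spanN|exact: (submodN hJ)| |].
  + by move=> n hn; rewrite tfun_topp ds // hopp0.
  + by rewrite tfun_topp; apply: htag_hopp.
- have [H [dH hH]] := tcomp_shift hjd (hW i).2 (castL (esym eX) (idm _)).
  exists (tcomp (projT2 (W i)) H); split=> //.
  + exact/span_act/span_gen.
  + exact: (submod_act hJ H (hW i).1).
  + rewrite hH; transitivity (htag (comp (tfun (projT2 (W i)) (sdeg j)) (idm _))).
      by apply: htag_comp => //; apply: htag_castL.
    by rewrite comp_idr.
- have [s [Ws Js ds hs]] := IH _ (phiNK (sdeg d) Y).
  have [H [dH hH]] := tcomp_shift (leqnn d) ds (castHom (esym eX) (esym (phiNK (sdeg d) Y)) f).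
  exists (tcomp s H); split=> //; [exact: span_act|exact: (submod_act hJ H Js)|].
  by rewrite hH; apply: htag_comp => //; apply: htag_castHom.
Qed.

Lemma span_of_lead_lifts (I : Type) (G : I -> {X : Obj C & th X B}) :
  (forall d X (f : th X B), J X f -> deg_le f d ->
     exists s : th X B, [/\ span (M := rep Tg B) G s, J X s, deg_le s d
                          & tfun s (sdeg d) = tfun f (sdeg d)]) ->
  forall X (f : th X B), J X f -> span (M := rep Tg B) G f.
Proof.
move=> lift X f Jf.
suff: forall d X (f : th X B), J X f ->
    (forall n, (d <= n)%N -> tfun f (sdeg n) = hzero) -> span (M := rep Tg B) G f.
  by move/(_ (tbnd f).+1 X f Jf); apply=> n hn; apply: tbndP; rewrite abs_sdeg; exact: hn.
elim=> [|d IH] {X f Jf} X f Jf hf.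
  have -> : f = @tzero C P kd X B.
    apply: thom_ext => i; case: (boolP (allowed kd i)) => h; last exact: tsub.
    by rewrite (allowed_sdeg h) hf.
  exact: span0.
have [s [sG Js ds es]] := lift d X f Jf hf.
have -> : f = tadd (tadd f (topp s)) s.
  apply: thom_ext => i; rewrite !tfun_tadd tfun_topp.
  exact: esym (@ag_subK (HG Cg _ _) _ _).
apply: spanD sG; apply: IH; first by apply: (submodD hJ) => //; apply: (submodN hJ).
move=> n hn; rewrite tfun_tadd tfun_topp.
case: (ltngtP d n) => [h|h|<-]; first by rewrite hf // ds // hopp0 hadd0f.
  by lia.
by rewrite es; apply: (@ag_addrN (HG Cg _ _)).
Qed.

Lemma ideal_fin_generated : fin_generated (M := rep Tg B) J.
Proof.
have [m stable] := lead_ideal_stable.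
have gens (j : 'I_m.+1) := lead_ideal_generators j.
pose I j := proj1_sig (constructive_indefinite_description _ (gens j)).
pose W j : I j -> {X : Obj C & th X B} :=
  proj1_sig (constructive_indefinite_description _ (proj2_sig
    (constructive_indefinite_description _ (gens j)))).
have W_spec j : (forall i, J _ (projT2 (W j i)) /\ deg_le (projT2 (W j i)) j) /\
    forall Y (a : Hom Y B), lead_ideal j a -> span (M := rep Cg B) (fun i => lead j (W j i)) a.
  exact: proj2_sig (constructive_indefinite_description _ (proj2_sig
    (constructive_indefinite_description _ (gens j)))).
pose G (s : {j : 'I_m.+1 & I j}) := W (tag s) (tagged s).
exists {j : 'I_m.+1 & I j}, G; split=> [[j i]|]; first exact: ((W_spec j).1 i).1.
apply: span_of_lead_lifts => d X f Jf df.
pose j : 'I_m.+1 := inord (minn d m).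
have ej : (j : nat) = minn d m by rewrite inordK // ltnS geq_minr.
have hjd : (j <= d)%N by rewrite ej geq_minl.
have Lf : lead_ideal j (tfun f (sdeg d)).
  have Ld : lead_ideal d (tfun f (sdeg d)) by exists X, f.
  by rewrite ej; case: leqP => _; [apply: Ld|apply: stable Ld].
have [s [sW Js ds es]] := lead_span_lift hjd (W_spec j).1 ((W_spec j).2 _ _ Lf) erefl.
exists s; split=> //; last exact: htag_inj.
by apply: span_trans sW => i; apply: (span_gen (M := rep Tg B) G (Tagged I i)).
Qed.

End Hilbert.

Lemma twisted_noetherian (kd : tw_kind) (sg : int) :
  sg = 1 \/ sg = -1 -> (forall i, allowed kd i = (0 <= sg * i)) ->
  noetherian C -> noetherian (twisted P kd).
Proof.
move=> hsg hall Cn.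
apply: (@noetherian_of_ideals _ (twisted_homgroup (kd := kd))).
- exact: tcomp_idl.
- exact: tcomp_0l.
- move=> B J hJ; exact: (@ideal_fin_generated kd sg hsg hall B J hJ Cn).
Qed.

(** * Laurent polynomials *)

Section Laurent.
Local Notation thL := (thom P Laurent).
Local Notation thP := (thom P PosPart).
Local Notation TLg := (twisted_homgroup (kd := Laurent)).

Definition incl A B (f : thP A B) : thL A B :=
  @THom C P Laurent A B (tfun f) (tfin f)
    (fun i (h : ~~ allowed Laurent i) => False_ind _ (notF h)).

Lemma incl_tadd A B (f g : thP A B) : incl (tadd f g) = tadd (incl f) (incl g).
Proof. by apply: thom_ext => i; rewrite [RHS]tfun_tadd; apply: (tfun_tadd f g i). Qed.

Lemma incl_tid A : incl (tid P PosPart A) = tid P Laurent A.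
Proof. by apply: thom_ext. Qed.

Lemma incl_tcomp A B D (g : thP B D) (f : thP A B) : incl (tcomp g f) = tcomp (incl g) (incl f).
Proof.
apply: thom_ext => k /=; rewrite /tcomp_fun big_mkcond [in RHS]big_mkcond.
apply: eq_bigr => i _; rewrite /tcomp_pred /=.
case: (boolP (0 <= i)) => hi; case: (boolP (0 <= k - i)) => hki //=.
- by rewrite (tsub g (i := k - i)) ?hki // comp_0l castL_hzero; case: ifP.
- by rewrite (tsub f (i := i)) ?hi // phiM_hzero comp_0r castL_hzero; case: ifP.
- by rewrite (tsub f (i := i)) ?hi // phiM_hzero comp_0r castL_hzero; case: ifP.
Qed.

Section Restriction.
Variables (M : module (twisted P Laurent)) (Mm : is_module M).

Definition res_module : module (twisted P PosPart) :=
  @Module (twisted P PosPart) (mod_obj M) (fun X Y (f : thP X Y) y => @mod_act _ M _ _ (incl f) y).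

Lemma res_is_module : is_module res_module.
Proof.
case: Mm => actD actDl act_comp act_id; split=> * /=.
- exact: actD.
- by rewrite incl_tadd; apply: actDl.
- by rewrite incl_tcomp; apply: act_comp.
- by rewrite incl_tid; apply: act_id.
Qed.

Lemma res_submodule (N : forall X, mod_obj M X -> Prop) :
  @is_submodule _ M N -> @is_submodule (twisted P PosPart) res_module N.
Proof. by case=> N0 ND NN Nact; split=> // X Y f; apply: Nact. Qed.

Lemma span_res I (g : I -> {X : Obj C & mod_obj M X}) X (x : mod_obj M X) :
  @span (twisted P PosPart) res_module I g X x -> @span _ M I g X x.
Proof. by elim=> *; [apply: span0|apply: spanD|apply: spanN|apply: span_gen|apply: span_act]. Qed.

End Restriction.

Definition tshift (n : nat) X : thL (phi P (- n%:Z) X) X :=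
  tmono (kd := Laurent) (i0 := n%:Z) (castL (esym (phiNK n%:Z X)) (idm X)) isT.

Definition tshift_inv (n : nat) X : thL X (phi P (- n%:Z) X) :=
  tmono (kd := Laurent) (i0 := - n%:Z) (idm (phi P (- n%:Z) X)) isT.

Lemma tshiftK n X : tcomp (tshift n X) (tshift_inv n X) = tid P Laurent X.
Proof.
apply: thom_ext => k; apply: htag_inj; rewrite tfun_tcomp_tmono phiM_idm comp_idr.
have [->|hk] := eqVneq k 0.
  by rewrite sub0r opprK /= tmono_fun_eq htag_castL.
rewrite tfun_tid_ne // /= tmono_fun_ne; last by rewrite opprK -subr_eq0 addrK.
by apply: htag_hzero => //; rewrite phi_add; congr phi; lia.
Qed.

Lemma tcomp_tshift_poly n X Y (f : thL X Y) : (tbnd f <= n)%N ->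
  exists p : thP (phi P (- n%:Z) X) Y, incl p = tcomp f (tshift n X).
Proof.
move=> hn.
have sub i : ~~ allowed PosPart i -> tfun (tcomp f (tshift n X)) i = hzero.
  by move=> /= hi; apply: htag_hzeroP; rewrite tfun_tcomp_tmono tbndP ?comp_0l //; lia.
by exists (THom (tfin (tcomp f (tshift n X))) sub); apply: thom_ext.
Qed.

Local Notation TPg := (twisted_homgroup (kd := PosPart)).

Lemma laurent_noetherian : noetherian (twisted P PosPart) -> noetherian (twisted P Laurent).
Proof.
move=> Pn M Mm Mfg N hN.
have [n [g [_ gspan]]] := generates_of_fg_sub TLg (@tcomp_idl Laurent) (@tcomp_0l Laurent) Mfg.
pose Sg := @span _ (res_module M) _ g.
have g_fg : fin_generated Sg by exists 'I_n, g; split=> [k|X x //]; apply: span_gen.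
have [K [h [hNh hspan]]] := noetherian_meet TPg (res_is_module Mm)
  (span_submodule (M := res_module M) g) (@tcomp_idl PosPart) (@tcomp_0l PosPart) Pn
  (res_submodule hN) g_fg.
apply/(fg_subP TLg Mm (@tcomp_idl Laurent) (@tcomp_0l Laurent) hN).
exists K, h; split=> [k|X x Nx]; first exact: (hNh k).1.
have [fs efs] := span_etaP TLg Mm (gspan X x I).
pose b := \max_k tbnd (fs k).
have Tx : span (M := res_module M) g (@mod_act _ M _ _ (tshift b X) x).
  rewrite -efs /span_eta (act_sumr Mm); apply: span_sum => k.
  have [p ep] : exists p, incl p = tcomp (fs k) (tshift b X).
    exact/tcomp_tshift_poly/(leq_bigmax_cond (F := fun k => tbnd (fs k)) k isT).
  rewrite -(act_comp Mm) /= -ep.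
  exact: (span_act (M := res_module M) p (span_gen (M := res_module M) g k)).
have NTx : N _ (@mod_act _ M _ _ (tshift b X) x) by apply: (submod_act hN).
have -> : x = @mod_act _ M _ _ (tshift_inv b X) (@mod_act _ M _ _ (tshift b X) x).
  by rewrite -(act_comp Mm) (_ : comp _ _ = idm X) ?(act_id Mm) //; apply: tshiftK.
exact/span_act/span_res/hspan.
Qed.

End Laurent.
End Automorphism.
End Preadditive.

Theorem mainTheorem14 (C : precat_data) (P : autom_data C) :
  additive_cat C -> is_automorphism P ->
  (noetherian C ->
     [/\ noetherian (poly_cat P), noetherian (invpoly_cat P) & noetherian (laurent_cat P)]) /\
  (noetherian (poly_cat P) -> noetherian (laurent_cat P)).
Proof.
case=> Cpa _ _ Pa.
have poly : noetherian C -> noetherian (poly_cat P).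
  by apply: (twisted_noetherian Cpa Pa (or_introl erefl)) => i /=; rewrite mul1r.
have invpoly : noetherian C -> noetherian (invpoly_cat P).
  by apply: (twisted_noetherian Cpa Pa (or_intror erefl)) => i /=; rewrite mulN1r oppr_ge0.
have laurent := laurent_noetherian Cpa Pa.
by split=> // Cn; split; [apply: poly|apply: invpoly|apply/laurent/poly].
Qed.
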